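(* Let $n\ge 2$, let $\Omega$ be a compact subset of $\mathbb{R}^n$, and for $\delta>0$ let $\Omega_\delta=\{x+\delta u : x\in\Omega,\ u\in B^n\}=\bigcup_{x\in\Omega}B_\delta(x)$. Then $\mathit{Uf}(\Omega_\delta)\subset \mathit{Uf}(\Omega)$ for every $\delta>0$. Moreover, if $\Omega$ is convex, then $\mathit{Uf}(\Omega_\delta)=\mathit{Uf}(\Omega)$ for every $\delta>0$.
   Context: $B^n$ is the closed unit ball in $\mathbb{R}^n$ and $B_\delta(x)$ the closed ball with center $x$ and radius $\delta$; $S^{n-1}$ is the unit sphere. For $X\subset\mathbb{R}^n$, $v\in S^{n-1}$ and $b\in\mathbb{R}$, put $X^+_{v,b}=X\cap\{x\in\mathbb{R}^n : x\cdot v>b\}$, and let $\mathrm{R}_{v,b}$ be the reflection of $\mathbb{R}^n$ in the hyperplane $\{x : x\cdot v=b\}$. For a bounded $X\subset\mathbb{R}^n$, define $l_X(v)=\inf\{a : \mathrm{R}_{v,c}(X^+_{v,c})\subset X \text{ for every } c\ge a\}$ and the minimal unfolded region $\mathit{Uf}(X)=\bigcap_{v\in S^{n-1}}\{x\in\mathbb{R}^n : x\cdot v\le l_X(v)\}$. *)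

From HB Require Import structures.
From mathcomp Require Import all_boot all_order all_algebra.
From mathcomp Require Import all_classical all_reals all_analysis.
Import numFieldTopology.Exports numFieldNormedType.Exports.
Set Implicit Arguments. Unset Strict Implicit. Unset Printing Implicit Defensive.
Import Order.TTheory GRing.Theory Num.Theory.
Local Open Scope classical_set_scope.
Local Open Scope ring_scope.

Section Unfold.
Variables (R : realType) (n : nat).
Implicit Types (x y u v : 'rV[R]_n) (X : set 'rV[R]_n) (b : R).

Definition dotv x y : R := \sum_(i < n) x ord0 i * y ord0 i.

Definition unit_sphere : set 'rV[R]_n := [set v | dotv v v = 1].

Definition unit_ball : set 'rV[R]_n := [set u | dotv u u <= 1].

Definition cap_plus X v b : set 'rV[R]_n := [set x | X x /\ dotv x v > b].

(* reflection in the hyperplane {x | x.v = b} (v a unit vector) *)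
Definition refl v b x : 'rV[R]_n := x - (2 * (dotv x v - b)) *: v.

(* l_X(v) = inf {a | forall c >= a, R_{v,c}(X^+_{v,c}) \subset X},
   taken in the extended reals (it is -oo iff X is empty) *)
Definition lX X v : \bar R :=
  ereal_inf [set a%:E | a in
    [set a : R | forall c, a <= c -> refl v c @` cap_plus X v c `<=` X]].

Definition Uf X : set 'rV[R]_n :=
  [set x | forall v, unit_sphere v -> ((dotv x v)%:E <= lX X v)%E].

Definition thicken X (delta : R) : set 'rV[R]_n :=
  [set y | exists2 x, X x & exists2 u, unit_ball u & y = x + delta *: u].

Definition convexR X : Prop :=
  forall x y (t : R), X x -> X y -> 0 <= t -> t <= 1 -> X ((1 - t) *: x + t *: y).

End Unfold.

(* For a hyperplane H_{v,c}, say that X is (v,c)-stable if reflecting the part of X beyond H_{v,c}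
   lands inside X; l_X(v) is the infimum of the levels beyond which X is stable, so Uf is monotone
   under the implication "X stable => Y stable".  Stability of Omega passes to Omega_delta: the
   reflection of a ball B_delta(x) either is the ball around the reflected centre, or (centre behind
   the hyperplane) stays within distance delta of x.  Conversely, for convex compact Omega, if the
   reflection p of some x in Omega misses Omega, let q be the point of Omega nearest to p and w the
   unit vector along p - q.  Omega lies in the half-space {z . w <= q . w}, hence Omega_delta in
   {z . w <= q . w + delta}; but p + delta w lies beyond it and is the reflection of the point
   x + delta R_v(w) of Omega_delta. *)
From HB Require Import structures.
From mathcomp Require Import all_boot all_order all_algebra.
From mathcomp Require Import all_classical all_reals all_analysis.
From mathcomp Require Import ring lra.
Import numFieldTopology.Exports numFieldNormedType.Exports.
Set Implicit Arguments. Unset Strict Implicit. Unset Printing Implicit Defensive.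
Import Order.TTheory GRing.Theory Num.Theory.
Local Open Scope classical_set_scope.
Local Open Scope ring_scope.

Section DotProduct.
Context {R : realType} {n : nat}.
Implicit Types (x y z u v w : 'rV[R]_n) (a : R).

Lemma dotvC x y : dotv x y = dotv y x.
Proof. by apply: eq_bigr => i _; rewrite mulrC. Qed.

Lemma dotvDl x y z : dotv (x + y) z = dotv x z + dotv y z.
Proof. by rewrite /dotv -big_split; apply: eq_bigr => i _; rewrite mxE mulrDl. Qed.

Lemma dotvZl a x y : dotv (a *: x) y = a * dotv x y.
Proof. by rewrite /dotv mulr_sumr; apply: eq_bigr => i _; rewrite mxE mulrA. Qed.

Lemma dotvNl x y : dotv (- x) y = - dotv x y.
Proof. by rewrite -scaleN1r dotvZl mulN1r. Qed.

Lemma dotvBl x y z : dotv (x - y) z = dotv x z - dotv y z.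
Proof. by rewrite dotvDl dotvNl. Qed.

Lemma dotvDr x y z : dotv z (x + y) = dotv z x + dotv z y.
Proof. by rewrite !(dotvC z) dotvDl. Qed.

Lemma dotvZr a x y : dotv y (a *: x) = a * dotv y x.
Proof. by rewrite !(dotvC y) dotvZl. Qed.

Lemma dotvNr x y : dotv y (- x) = - dotv y x.
Proof. by rewrite !(dotvC y) dotvNl. Qed.

Lemma dotvBr x y z : dotv z (x - y) = dotv z x - dotv z y.
Proof. by rewrite dotvDr dotvNr. Qed.

Definition dotvE := (dotvDl, dotvDr, dotvBl, dotvBr, dotvZl, dotvZr, dotvNl, dotvNr).

Lemma dotv_sqrB a x y :
  dotv (x - a *: y) (x - a *: y) = dotv x x - 2 * a * dotv y x + a ^+ 2 * dotv y y.
Proof. by rewrite !dotvE (dotvC x y); ring. Qed.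

Lemma dotv_ge0 x : 0 <= dotv x x.
Proof. by apply: sumr_ge0 => i _; rewrite -expr2 sqr_ge0. Qed.

Lemma dotv_eq0 x : (dotv x x == 0) = (x == 0).
Proof.
apply/idP/eqP => [|->]; last by rewrite -(scale0r 0) dotvZl mul0r.
rewrite psumr_eq0 => [/allP x0|i _]; last by rewrite -expr2 sqr_ge0.
apply/rowP => i; rewrite mxE.
by have /implyP/(_ isT) := x0 i (mem_index_enum _); rewrite mulf_eq0 orbb => /eqP.
Qed.

Lemma dotv_unit_sqr_le x w : dotv w w = 1 -> dotv x w ^+ 2 <= dotv x x.
Proof. by move=> ww; have := dotv_ge0 (x - dotv x w *: w); rewrite !dotvE ww (dotvC w x); lra. Qed.

Lemma dotv_ball_unit_le1 u w : unit_ball u -> dotv w w = 1 -> dotv u w <= 1.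
Proof. by rewrite /unit_ball /= => u1 /(dotv_unit_sqr_le u); nra. Qed.

Lemma continuous_sqdist p : continuous (fun z : 'rV[R]_n => dotv (p - z) (p - z)).
Proof.
apply: (@continuous_big _ _ +%R 0 xpredT) => [[x y]|i _ z]; first exact: add_continuous.
have coordB : {for z, continuous (fun z : 'rV[R]_n => (p - z) ord0 i)}.
  apply: (@continuous_comp _ _ _ (fun z : 'rV[R]_n => p - z) (fun M : 'rV[R]_n => M ord0 i)).
    by apply: continuousB; [exact: cst_continuous | move=> ?].
  exact: coord_continuous.
exact: continuousM.
Qed.

End DotProduct.

Section Reflection.
Context {R : realType} {n : nat}.
Implicit Types (x y u v w : 'rV[R]_n) (c d : R).

Lemma dotv_refl v c x : dotv v v = 1 -> dotv (refl v c x) v = 2 * c - dotv x v.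
Proof. by move=> vv; rewrite /refl !dotvE vv; ring. Qed.

Lemma reflK v c x : dotv v v = 1 -> refl v c (refl v c x) = x.
Proof.
move=> vv; rewrite {1}/refl dotv_refl //.
by apply/rowP => i; rewrite /refl !mxE; ring.
Qed.

Lemma refl_shift v c x d u : refl v c (x + d *: u) = refl v c x + d *: refl v 0 u.
Proof. by apply/rowP => i; rewrite /refl !dotvE !mxE; ring. Qed.

Lemma dotv_refl0 v u : dotv v v = 1 -> dotv (refl v 0 u) (refl v 0 u) = dotv u u.
Proof. by move=> vv; rewrite /refl !dotvE vv (dotvC v u); ring. Qed.

End Reflection.

Definition refl_stable {R : realType} {n : nat} (X : set 'rV[R]_n) v c :=
  refl v c @` cap_plus X v c `<=` X.

Section Thickening.
Context {R : realType} {n : nat}.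
Implicit Types (x y z u v w : 'rV[R]_n) (b c d : R) (X : set 'rV[R]_n).

Lemma thicken_of_sqdist X d x y :
  0 < d -> X x -> dotv (y - x) (y - x) <= d ^+ 2 -> thicken X d y.
Proof.
move=> d0 Xx yx; exists x => //; exists (d^-1 *: (y - x)).
  by rewrite /unit_ball /= dotvZl dotvZr mulrA -invfM -expr2 mulrC ler_pdivrMr ?exprn_gt0 // mul1r.
by rewrite scalerA mulfV ?gt_eqF // scale1r addrC subrK.
Qed.

Lemma thicken_halfspace X w b d : dotv w w = 1 -> 0 <= d ->
  X `<=` [set z | dotv z w <= b] -> thicken X d `<=` [set z | dotv z w <= b + d].
Proof.
move=> ww d0 Xw _ [x Xx [u u1 ->]]; rewrite /= dotvDl dotvZl.
have := Xw x Xx; have := dotv_ball_unit_le1 u1 ww; rewrite /=; nra.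
Qed.

Lemma refl_stable_thicken X v c d : 0 < d -> dotv v v = 1 ->
  refl_stable X v c -> refl_stable (thicken X d) v c.
Proof.
move=> d0 vv stX _ [_ [[x Xx [u u1 ->]] yv] <-].
have [xv|xv] := ltrP c (dotv x v).
  rewrite refl_shift; exists (refl v c x); first by apply: stX; exists x.
  by exists (refl v 0 u); rewrite // /unit_ball /= dotv_refl0.
(* the centre lies behind the hyperplane, so reflection moves the point towards x *)
apply: (thicken_of_sqdist d0 Xx); move: yv u1; rewrite /cap_plus /unit_ball /=.
rewrite /refl !dotvE vv (dotvC v u) (dotvC v x) => yv u1.
set s := dotv x v + d * dotv u v - c.
have s0 : 0 < s by rewrite /s; lra.
have : 0 <= s * (c - dotv x v) by apply: mulr_ge0; lra.
rewrite /s; nra.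
Qed.

Lemma compact_nearest X x p : compact X -> X x ->
  exists2 q, X q & forall y, X y -> dotv (p - q) (p - q) <= dotv (p - y) (p - y).
Proof.
move=> cpt Xx.
have [q Xq qmin] := compact_EVT_min (ex_intro _ x Xx) cpt
  (continuous_subspaceT (@continuous_sqdist _ _ p)).
by exists q => [|y Xy]; [rewrite inE in Xq | apply: qmin; rewrite inE].
Qed.

Lemma nearest_obtuse X p q z : convexR X -> X q -> X z ->
  (forall y, X y -> dotv (p - q) (p - q) <= dotv (p - y) (p - y)) ->
  dotv (z - q) (p - q) <= 0.
Proof.
move=> cvx Xq Xz qmin; rewrite leNgt; apply/negP.
have := dotv_ge0 (z - q).
set a := dotv (z - q) (p - q); set b := dotv (z - q) (z - q) => b0 a0.
(* moving from q towards z by t = a / (a + b) gets strictly closer to p *)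
pose t := a / (a + b).
have ab0 : 0 < a + b by lra.
have t0 : 0 < t by rewrite divr_gt0.
have t1 : t <= 1 by rewrite ler_pdivrMr //; lra.
have tab : t * (a + b) = a by rewrite /t mulfVK ?gt_eqF.
have := qmin _ (cvx _ _ _ Xq Xz (ltW t0) t1).
have -> : p - ((1 - t) *: q + t *: z) = (p - q) - t *: (z - q).
  by apply/rowP => i; rewrite !mxE; ring.
rewrite dotv_sqrB -/a -/b.
have ta : 0 < t * a by rewrite mulr_gt0.
nra.
Qed.

Lemma convex_compact_separation X x p : convexR X -> compact X -> X x -> ~ X p ->
  exists2 w, dotv w w = 1 & exists2 b, X `<=` [set z | dotv z w <= b] & b < dotv p w.
Proof.
move=> cvx cpt Xx Xp; have [q Xq qmin] := compact_nearest p cpt Xx.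
have pq_gt0 : 0 < dotv (p - q) (p - q).
  rewrite lt_neqAle dotv_ge0 andbT eq_sym dotv_eq0 subr_eq0.
  by apply/eqP => pq; apply: Xp; rewrite pq.
pose s := Num.sqrt (dotv (p - q) (p - q)).
have s0 : 0 < s by rewrite sqrtr_gt0.
have ss : s ^+ 2 = dotv (p - q) (p - q) by rewrite sqr_sqrtr // ltW.
exists (s^-1 *: (p - q)); first by rewrite dotvZl dotvZr -ss; field; rewrite gt_eqF.
exists (dotv q (s^-1 *: (p - q))).
  move=> z Xz; rewrite /= -subr_le0 -dotvBl dotvZr.
  by apply: mulr_ge0_le0; [rewrite invr_ge0 ltW | exact: nearest_obtuse qmin].
rewrite -subr_gt0 -dotvBl dotvZr -ss.
by rewrite expr2 mulrA mulVf ?gt_eqF // mul1r.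
Qed.

Lemma refl_stable_of_thicken X v c d : 0 < d -> dotv v v = 1 -> convexR X -> compact X ->
  refl_stable (thicken X d) v c -> refl_stable X v c.
Proof.
move=> d0 vv cvx cpt stXd _ [x [Xx xv] <-]; apply: contrapT => Xp.
have [w ww [b Xw bp]] := convex_compact_separation cvx cpt Xx Xp.
have wv : dotv w v < 0.
  have : dotv (refl v c x - x) w > 0 by rewrite dotvBl subr_gt0 (le_lt_trans (Xw x Xx)).
  rewrite /refl addrAC subrr add0r dotvNl dotvZl (dotvC w) oppr_gt0.
  by rewrite pmulr_rlt0 // mulr_gt0 // subr_gt0.
have y_beyond : cap_plus (thicken X d) v c (x + d *: refl v 0 w).
  split.
    by exists x => //; exists (refl v 0 w); rewrite // /unit_ball /= dotv_refl0 // ww.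
  rewrite /= dotvDl dotvZl dotv_refl // mulr0 sub0r.
  by rewrite -[X in X < _]addr0 ltr_leD // mulr_ge0 ?oppr_ge0 ?ltW.
have := thicken_halfspace ww (ltW d0) Xw (stXd _ (imageP _ y_beyond)).
rewrite /= refl_shift reflK // dotvDl dotvZl ww; lra.
Qed.

End Thickening.

Lemma Uf_subset {R : realType} {n : nat} (X Y : set 'rV[R]_n) :
  (forall v c, unit_sphere v -> refl_stable X v c -> refl_stable Y v c) -> Uf Y `<=` Uf X.
Proof.
move=> XY x UYx v v1; apply: le_trans (UYx v v1) _.
apply: le_ereal_inf => _ [a Xa <-]; exists a => //= c ac.
exact: XY (Xa c ac).
Qed.

Theorem theorem3p1 (R : realType) (n : nat) (Omega : set 'rV[R]_n) :
  (2 <= n)%N -> compact Omega ->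
  (forall delta : R, 0 < delta -> Uf (thicken Omega delta) `<=` Uf Omega) /\
  (convexR Omega ->
     forall delta : R, 0 < delta -> Uf (thicken Omega delta) = Uf Omega).
Proof.
move=> _ cpt.
have Uf_thicken delta : 0 < delta -> Uf (thicken Omega delta) `<=` Uf Omega.
  by move=> d0; apply: Uf_subset => v c v1; exact: refl_stable_thicken.
split=> // cvx delta d0; apply/seteqP; split; first exact: Uf_thicken.
by apply: Uf_subset => v c v1; exact: refl_stable_of_thicken.
Qed.
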